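(* Assume the setup in the context, with the fine-tuning regime, and let $0<\epsilon\le 1$ be such that $|\langle\tau_i,\tau_j\rangle|\le\epsilon\|\tau_i\|\|\tau_j\|$ for all $i\neq j$. Let $\mathbf{T}=[\tau_1,\dots,\tau_T]\in\mathbb{R}^{d\times T}$, $\mathbf{G}=\mathbf{T}^\top\mathbf{T}$ with eigenvalues $\lambda_1(\mathbf{G})\ge\dots\ge\lambda_T(\mathbf{G})$, and $1\le M<T$. Let $\mathbf{W}_e\in\mathbb{R}^{T\times M}$, $\mathbf{W}_d\in\mathbb{R}^{M\times T}$, $\hat{\mathbf{T}}=\mathbf{T}\mathbf{W}_e\mathbf{W}_d$ with $i$-th column $\hat\tau_i$, and suppose $\|\hat{\mathbf{T}}-\mathbf{T}\|_2^2=\lambda_{M+1}(\mathbf{G})$ (spectral norm). Fix $i\in[T]$ and $\alpha_i\in[0,1]$, let $\theta_{\mathrm{Neg},i}=\theta_0-\alpha_i\hat\tau_i$, and assume local smoothness holds with radius $r\ge 2\sqrt{C}+\sqrt{\lambda_{M+1}(\mathbf{G})}$. Then for every $j\neq i$, $$\mathcal{L}_j(\theta_{\mathrm{Neg},i})-\mathcal{L}_j(\theta_0)\le L_jC\Big(\frac{5}{2}+2\epsilon\Big)+L_j\lambda_{M+1}(\mathbf{G}).$$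
   Context: Setup: $\theta_0\in\mathbb{R}^d$ is a pretrained parameter vector; $\theta_1,\dots,\theta_T\in\mathbb{R}^d$ are fine-tuned parameters and $\tau_i:=\theta_i-\theta_0$ are task vectors. For each task $i$, $\mathcal{L}_i:\mathbb{R}^d\to\mathbb{R}$ is a differentiable loss (population risk). Norms are Euclidean. Fine-tuning regime: $\nabla\mathcal{L}_i(\theta_i)=0$ for all $i\in[T]$, and there is $C>0$ with $\|\tau_i\|^2\le C$ for all $i$. Local smoothness with radius $r>0$: for each $i$ there is $L_i\ge 0$ such that for all $\theta$ with $\|\theta-\theta_i\|\le r$, $\big|\mathcal{L}_i(\theta)-\mathcal{L}_i(\theta_i)-\langle\theta-\theta_i,\nabla\mathcal{L}_i(\theta_i)\rangle\big|\le\frac{L_i}{2}\|\theta-\theta_i\|^2$. The hypothesis $\|\hat{\mathbf{T}}-\mathbf{T}\|_2^2=\lambda_{M+1}(\mathbf{G})$ says the autoencoder reconstruction attains the optimal rank-$M$ spectral-norm error. *)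

From HB Require Import structures.
From mathcomp Require Import all_boot all_order all_algebra.
From mathcomp Require Import all_classical all_reals all_analysis.
Set Implicit Arguments. Unset Strict Implicit. Unset Printing Implicit Defensive.
Import Order.TTheory GRing.Theory Num.Theory.
Import numFieldNormedType.Exports.
Local Open Scope ring_scope.
Local Open Scope classical_set_scope.

Section Defs.
Variable R : realType.

Definition dotv (d : nat) (u v : 'cV[R]_d) : R := \sum_(k < d) u k 0 * v k 0.

Definition enorm (m n : nat) (A : 'M[R]_(m, n)) : R :=
  Num.sqrt (\sum_(i < m) \sum_(j < n) A i j ^+ 2).

Definition specnorm (m n : nat) (A : 'M[R]_(m, n)) : R :=
  sup [set enorm (A *m x) | x in [set x : 'cV[R]_n | enorm x = 1]].

Definition grad (d : nat) (f : 'cV[R]_d -> R) (x : 'cV[R]_d) : 'cV[R]_d :=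
  \col_(k < d) ('d f x (delta_mx k 0 : 'cV[R]_d)).

Definition taskmx (d n : nat) (th0 : 'cV[R]_d) (th : 'I_n -> 'cV[R]_d) : 'M[R]_(d, n) :=
  \matrix_(k < d, i < n) (th i - th0) k 0.

Definition sorted_eigenvalues (n : nat) (G : 'M[R]_n) (s : seq R) : Prop :=
  [/\ size s = n, sorted (fun x y => y <= x) s &
      char_poly G = \prod_(x <- s) ('X - x%:P)].
End Defs.

From HB Require Import structures.
From mathcomp Require Import all_boot all_order all_algebra.
From mathcomp Require Import all_classical all_reals all_analysis.
From mathcomp Require Import ring lra.
Import Order.TTheory GRing.Theory Num.Theory.
Import numFieldNormedType.Exports.
Set Implicit Arguments. Unset Strict Implicit. Unset Printing Implicit Defensive.
Local Open Scope ring_scope.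

(* With [u = tau_j], [t = tau_i] and [e] the i-th column of [T^ - T], we have
   [theta_neg - theta_j = -(u + alpha t + alpha e)] and [theta_0 - theta_j = -u].
   Since [theta_j] is a critical point of [L_j], smoothness gives
   [L_j(theta_neg) - L_j(theta_0) <= L_j/2 (|u + alpha t + alpha e|^2 + |u|^2)].
   A column of a matrix is no longer than its spectral norm, so [|e|^2 <= lambda_(M+1)],
   and [|u + alpha t + alpha e|^2 <= 2 |u + alpha t|^2 + 2 |e|^2 <= 4C + 4 eps C + 2 lambda_(M+1)].
   The same decomposition shows that both points lie within radius
   [2 sqrt C + sqrt lambda_(M+1)] of [theta_j], where smoothness applies. *)

Section Euclidean.
Variables (R : realType) (m : nat).
Implicit Types (u v w : 'cV[R]_m) (a c : R).

Lemma dotvC u v : dotv u v = dotv v u.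
Proof. by apply: eq_bigr => k _; rewrite mulrC. Qed.

Lemma dotvDl u v w : dotv (u + v) w = dotv u w + dotv v w.
Proof. by rewrite /dotv -big_split; apply: eq_bigr => k _; rewrite !mxE mulrDl. Qed.

Lemma dotvZl a u v : dotv (a *: u) v = a * dotv u v.
Proof. by rewrite /dotv mulr_sumr; apply: eq_bigr => k _; rewrite !mxE mulrA. Qed.

Lemma dotvNl u v : dotv (- u) v = - dotv u v.
Proof. by rewrite -scaleN1r dotvZl mulN1r. Qed.

Lemma dotvNr u v : dotv u (- v) = - dotv u v.
Proof. by rewrite dotvC dotvNl dotvC. Qed.

Lemma dotvZr a u v : dotv u (a *: v) = a * dotv u v.
Proof. by rewrite dotvC dotvZl dotvC. Qed.

Lemma dotv0r u : dotv u 0 = 0.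
Proof. by rewrite -(scale0r 0) dotvZr mul0r. Qed.

Lemma dotvv_eq0 u v : dotv u u = 0 -> dotv u v = 0.
Proof.
move=> /psumr_eq0P u0; rewrite /dotv big1 // => k _.
have /eqP : u k 0 * u k 0 = 0 by apply: u0 => // l _; rewrite -expr2 sqr_ge0.
by rewrite mulf_eq0 orbb => /eqP ->; rewrite mul0r.
Qed.

Lemma enorm_sqr u : enorm u ^+ 2 = dotv u u.
Proof.
rewrite sqr_sqrtr; last by apply: sumr_ge0 => k _; apply: sumr_ge0 => l _; rewrite sqr_ge0.
by apply: eq_bigr => k _; rewrite big_ord1 expr2.
Qed.

Lemma enorm_ge0 u : 0 <= enorm u.
Proof. exact: sqrtr_ge0. Qed.

Lemma enorm_le_sqrt u c : enorm u ^+ 2 <= c -> enorm u <= Num.sqrt c.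
Proof.
move=> hc; have c0 := le_trans (sqr_ge0 _) hc.
by rewrite -[enorm u]ger0_norm ?enorm_ge0 // -sqrtr_sqr ler_sqrt.
Qed.

Lemma enorm_sqrD u v :
  enorm (u + v) ^+ 2 = enorm u ^+ 2 + 2 * dotv u v + enorm v ^+ 2.
Proof. by rewrite !enorm_sqr !dotvDl ![dotv _ (_ + _)]dotvC !dotvDl (dotvC v u); ring. Qed.

Lemma enormN u : enorm (- u) = enorm u.
Proof.
by rewrite /enorm; congr Num.sqrt; apply: eq_bigr => k _; apply: eq_bigr => l _;
  rewrite mxE sqrrN.
Qed.

Lemma enormZ a u : enorm (a *: u) = `|a| * enorm u.
Proof.
rewrite /enorm -sqrtr_sqr -sqrtrM ?sqr_ge0 //; congr Num.sqrt.
by rewrite mulr_sumr; apply: eq_bigr => k _; rewrite mulr_sumr; apply: eq_bigr => l _;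
  rewrite mxE exprMn.
Qed.

Lemma dotv_le_enorm u v : dotv u v <= enorm u * enorm v.
Proof.
have [a0 b0] := (enorm_ge0 u, enorm_ge0 v).
have [/eqP|ab_neq0] := eqVneq (enorm u * enorm v) 0.
  rewrite mulf_eq0 => /orP[] /eqP n0.
    by rewrite dotvv_eq0 ?n0 ?mul0r // -enorm_sqr n0 expr0n.
  by rewrite dotvC dotvv_eq0 ?n0 ?mulr0 // -enorm_sqr n0 expr0n.
(* [0 <= |b u - a v|^2 = 2ab (ab - <u, v>)] with [a = |u|], [b = |v|]. *)
have := sqr_ge0 (enorm (enorm v *: u - enorm u *: v)).
rewrite enorm_sqrD enormN !enormZ dotvNr dotvZl dotvZr !ger0_norm //.
have : 0 < enorm u * enorm v by rewrite lt_def ab_neq0 mulr_ge0.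
nra.
Qed.

Lemma enormD_le u v : enorm (u + v) <= enorm u + enorm v.
Proof.
rewrite -ler_sqr ?nnegrE ?addr_ge0 ?enorm_ge0 // enorm_sqrD sqrrD.
by have := dotv_le_enorm u v; lra.
Qed.

Lemma enorm_sqrD_le u v : enorm (u + v) ^+ 2 <= 2 * enorm u ^+ 2 + 2 * enorm v ^+ 2.
Proof.
rewrite enorm_sqrD; have := dotv_le_enorm u v.
by have := sqr_ge0 (enorm u - enorm v); rewrite sqrrB; lra.
Qed.

Lemma incoherent_dotv_le u v eps c :
  0 <= eps -> `|dotv u v| <= eps * enorm u * enorm v ->
  enorm u ^+ 2 <= c -> enorm v ^+ 2 <= c -> dotv u v <= eps * c.
Proof.
move=> eps0 uv uc vc; apply: le_trans (ler_norm _) (le_trans uv _).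
rewrite -mulrA ler_wpM2l //.
by have := sqr_ge0 (enorm u - enorm v); rewrite sqrrB; lra.
Qed.

End Euclidean.

Section SpectralNorm.
Variables (R : realType) (p q : nat).
Implicit Types (A : 'M[R]_(p, q)) (x : 'cV[R]_q).

Lemma enorm_mulmx_le A x : enorm x = 1 -> enorm (A *m x) <= enorm A.
Proof.
move=> x1; rewrite ler_sqrt; last first.
  by apply: sumr_ge0 => k _; apply: sumr_ge0 => l _; rewrite sqr_ge0.
apply: ler_sum => k _; rewrite big_ord1.
pose a : 'cV[R]_q := (row k A)^T.
have -> : (A *m x) k 0 = dotv a x by rewrite mxE; apply: eq_bigr => l _; rewrite !mxE.
have -> : \sum_(l < q) A k l ^+ 2 = enorm a ^+ 2.
  by rewrite enorm_sqr; apply: eq_bigr => l _; rewrite !mxE expr2.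
have := dotv_le_enorm a x; have := dotv_le_enorm a (- x).
by rewrite dotvNr enormN x1 mulr1; have := enorm_ge0 a; nra.
Qed.

Lemma enorm_delta (i : 'I_q) : enorm (delta_mx i 0 : 'cV[R]_q) = 1.
Proof.
rewrite /enorm (bigD1 i) //= big_ord1 mxE !eqxx expr1n.
rewrite [X in _ + X]big1 ?addr0 ?sqrtr1 // => k ki.
by rewrite big_ord1 mxE (negbTE ki) expr0n.
Qed.

Lemma enorm_col_le_specnorm A (i : 'I_q) : enorm (col i A) <= specnorm A.
Proof.
pose x : 'cV[R]_q := delta_mx i 0.
have x1 : enorm x = 1 := enorm_delta i.
apply: sup_upper_bound; last by exists x => //; rewrite colE.
split; first by exists (enorm (A *m x)), x.
by exists (enorm A) => _ [y y1 <-]; apply: enorm_mulmx_le.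
Qed.
End SpectralNorm.

Lemma smooth_critical_gap (R : realType) (d : nat) (f : 'cV[R]_d -> R) (c : 'cV[R]_d)
    (L rho : R) :
  grad f c = 0 ->
  (forall x, enorm (x - c) <= rho ->
     `|f x - f c - dotv (x - c) (grad f c)| <= L / 2 * enorm (x - c) ^+ 2) ->
  forall x y, enorm (x - c) <= rho -> enorm (y - c) <= rho ->
  f x - f y <= L / 2 * (enorm (x - c) ^+ 2 + enorm (y - c) ^+ 2).
Proof.
move=> gc0 smooth x y xc yc.
have := smooth x xc; have := smooth y yc.
rewrite gc0 !dotv0r !subr0 !ler_norml => /andP[hy _] /andP[_ hx].
lra.
Qed.

Section NegationStep.
Variables (R : realType) (m : nat) (u t e : 'cV[R]_m) (alpha C eps lam : R).

Lemma enorm_negation_step_le :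
  0 <= alpha -> alpha <= 1 ->
  enorm u ^+ 2 <= C -> enorm t ^+ 2 <= C -> enorm e ^+ 2 <= lam ->
  enorm (u + alpha *: t + alpha *: e) <= 2 * Num.sqrt C + Num.sqrt lam.
Proof.
move=> alpha0 alpha1 uC tC elam; have uS := enorm_le_sqrt uC.
have tS := le_trans (ler_piMl (enorm_ge0 t) alpha1) (enorm_le_sqrt tC).
have eS := le_trans (ler_piMl (enorm_ge0 e) alpha1) (enorm_le_sqrt elam).
apply: le_trans (enormD_le _ _) _; apply: le_trans (lerD (enormD_le _ _) (lexx _)) _.
by rewrite !enormZ ger0_norm //; lra.
Qed.

Lemma enorm_sqr_negation_step_le :
  0 <= alpha -> alpha <= 1 ->
  enorm u ^+ 2 <= C -> enorm t ^+ 2 <= C -> enorm e ^+ 2 <= lam ->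
  0 <= eps * C -> dotv u t <= eps * C ->
  enorm (u + alpha *: t + alpha *: e) ^+ 2 <= 4 * C + 4 * eps * C + 2 * lam.
Proof.
move=> alpha0 alpha1 uC tC elam epsC0 utC; apply: le_trans (enorm_sqrD_le _ _) _.
rewrite enorm_sqrD dotvZr !enormZ ger0_norm // !exprMn.
have alpha_sqr : alpha ^+ 2 <= 1 by rewrite expr_le1.
have := le_trans (ler_piMl (sqr_ge0 (enorm t)) alpha_sqr) tC.
have := le_trans (ler_piMl (sqr_ge0 (enorm e)) alpha_sqr) elam.
have := le_trans (ler_wpM2l alpha0 utC) (ler_piMl epsC0 alpha1).
lra.
Qed.

End NegationStep.

Theorem mainTheorem9 (R : realType) (d n : nat)
  (th0 : 'cV[R]_d) (th : 'I_n -> 'cV[R]_d) (Loss : 'I_n -> 'cV[R]_d -> R)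
  (C eps r : R) (Lc : 'I_n -> R) (M : nat)
  (We : 'M[R]_(n, M)) (Wd : 'M[R]_(M, n)) (s : seq R)
  (i : 'I_n) (alpha : R) :
  (forall k x, differentiable (Loss k) x) ->
  (forall k, grad (Loss k) (th k) = 0) ->
  0 < C ->
  (forall k, enorm (th k - th0) ^+ 2 <= C) ->
  0 < eps -> eps <= 1 ->
  (forall k l, k != l ->
     `|dotv (th k - th0) (th l - th0)|
       <= eps * enorm (th k - th0) * enorm (th l - th0)) ->
  sorted_eigenvalues ((taskmx th0 th)^T *m taskmx th0 th) s ->
  (1 <= M)%N -> (M < n)%N ->
  specnorm (taskmx th0 th *m We *m Wd - taskmx th0 th) ^+ 2 = nth 0 s M ->
  0 <= alpha -> alpha <= 1 ->
  (forall k, 0 <= Lc k) ->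
  (forall k x, enorm (x - th k) <= r ->
     `|Loss k x - Loss k (th k) - dotv (x - th k) (grad (Loss k) (th k))|
       <= Lc k / 2 * enorm (x - th k) ^+ 2) ->
  2 * Num.sqrt C + Num.sqrt (nth 0 s M) <= r ->
  let theta_neg := th0 - alpha *: col i (taskmx th0 th *m We *m Wd) in
  forall j, j != i ->
    Loss j theta_neg - Loss j th0
      <= Lc j * C * (5%:R / 2%:R + 2%:R * eps) + Lc j * nth 0 s M.
Proof.
move=> _ crit C0 taskC eps0 _ incoh _ _ _ spec alpha0 alpha1 L0 smooth radius
  theta_neg j ji.
set lam := nth 0 s M; set T := taskmx th0 th; set A := T *m We *m Wd - T.
set u := th j - th0; set t := th i - th0; set e := col i A.
have neg_shift : theta_neg - th j = - (u + alpha *: t + alpha *: e).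
  by apply/matrixP => a b; rewrite /theta_neg (ord1 b) !mxE; ring.
have base_shift : th0 - th j = - u by rewrite opprB.
have eA : enorm e ^+ 2 <= lam.
  have eS : enorm e <= specnorm A := enorm_col_le_specnorm A i.
  by rewrite /lam -spec lerXn2r ?nnegrE ?enorm_ge0 // (le_trans (enorm_ge0 _) eS).
have uC : enorm u ^+ 2 <= C := taskC j.
have tC : enorm t ^+ 2 <= C := taskC i.
have utC := incoherent_dotv_le (ltW eps0) (incoh j i ji) uC tC.
have eps_C0 : 0 <= eps * C by rewrite mulr_ge0 ?ltW.
have neg_r : enorm (u + alpha *: t + alpha *: e) <= r.
  exact: le_trans (enorm_negation_step_le alpha0 alpha1 uC tC eA) radius.
have base_r : enorm u <= r.
  apply: le_trans (enorm_le_sqrt uC) (le_trans _ radius).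
  by have := sqrtr_ge0 C; have := sqrtr_ge0 lam; lra.
have := smooth_critical_gap (crit j) (smooth j) (x := theta_neg) (y := th0).
rewrite neg_shift base_shift !enormN => /(_ neg_r base_r) /le_trans; apply.
have := enorm_sqr_negation_step_le alpha0 alpha1 uC tC eA eps_C0 utC.
move=> /lerD /(_ uC) /(ler_wpM2l (L0 j)); lra.
Qed.
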